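(* Let $A$ be a dilation, $X$ a ball quasi-Banach function space, $s\in(0,\infty)$, and $d\mu$ a Borel measure on $\mathbb R^n\times\mathbb Z$. Define $$\widetilde{\|d\mu\|}^A_X:=\sup\left\|\left\{\sum_{i\in\mathbb N}\left[\frac{\lambda_i}{\|\mathbf 1_{B^{(i)}}\|_X}\right]^s\mathbf 1_{B^{(i)}}\right\}^{1/s}\right\|_X^{-1}\sum_{j\in\mathbb N}\frac{\lambda_j|B^{(j)}|^{1/2}}{\|\mathbf 1_{B^{(j)}}\|_X}\left[\int_{\widehat{B^{(j)}}}|d\mu(x,k)|\right]^{1/2},$$ the supremum over all $\{B^{(j)}\}_{j\in\mathbb N}\subset\mathcal B$ and $\{\lambda_j\}_{j\in\mathbb N}\subset[0,\infty)$ with $\left\|\left\{\sum_{i\in\mathbb N}\left[\frac{\lambda_i}{\|\mathbf 1_{B^{(i)}}\|_X}\right]^s\mathbf 1_{B^{(i)}}\right\}^{1/s}\right\|_X\in(0,\infty)$. Then $\widetilde{\|d\mu\|}^A_X=\|d\mu\|^A_X$.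
   Context: A real $n\times n$ matrix $A$ is a dilation if all its eigenvalues have modulus $>1$; $b:=|\det A|$. Fix an open ellipsoid $\Delta$ symmetric about $0$ with $|\Delta|=1$ and $r>1$ with $\Delta\subset r\Delta\subset A\Delta$; $B_k:=A^k\Delta$, $\mathcal B:=\{x+B_k:x\in\mathbb R^n,k\in\mathbb Z\}$. Ball quasi-Banach function space: a quasi-normed space $X$ of measurable functions with quasi-norm defined on all measurable functions such that (i) $\|f\|_X=0\Rightarrow f=0$ a.e.; (ii) $|g|\le|f|$ a.e. $\Rightarrow\|g\|_X\le\|f\|_X$; (iii) $0\le f_m\uparrow f$ a.e. $\Rightarrow\|f_m\|_X\uparrow\|f\|_X$; (iv) $\mathbf 1_B\in X$ for $B\in\mathcal B$. For $B\in\mathcal B$, the tent over $B$ is $\widehat B:=\{(y,k)\in\mathbb R^n\times\mathbb Z:y+B_k\subset B\}$. For a Borel measure $d\mu$ on $\mathbb R^n\times\mathbb Z$ and $s\in(0,\infty)$, $$\|d\mu\|^A_X:=\sup\left\|\left\{\sum_{i=1}^m\left[\frac{\lambda_i}{\|\mathbf 1_{B^{(i)}}\|_X}\right]^s\mathbf 1_{B^{(i)}}\right\}^{1/s}\right\|_X^{-1}\sum_{j=1}^m\frac{\lambda_j|B^{(j)}|^{1/2}}{\|\mathbf 1_{B^{(j)}}\|_X}\left[\int_{\widehat{B^{(j)}}}|d\mu(x,k)|\right]^{1/2},$$ the supremum over $m\in\mathbb N$, $\{B^{(j)}\}_{j=1}^m\subset\mathcal B$ and $\{\lambda_j\}_{j=1}^m\subset[0,\infty)$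 with $\sum_j\lambda_j\ne0$; $d\mu$ is an anisotropic $X$–Carleson measure if this is finite. *)

From HB Require Import structures.
From mathcomp Require Import all_boot all_order all_algebra.
From mathcomp Require Import all_classical all_reals all_analysis.
From mathcomp Require Import complex.
Import Order.TTheory GRing.Theory Num.Theory.
Import numFieldTopology.Exports numFieldNormedType.Exports.

Set Implicit Arguments.
Unset Strict Implicit.
Unset Printing Implicit Defensive.

Local Open Scope classical_set_scope.
Local Open Scope ring_scope.

Section Anisotropic.
Variables (R : realType) (n : nat).
Local Notation V := 'cV[R]_n.

Definition obox (a b : V) : set V :=
  [set x | forall i : 'I_n, a i 0 < x i 0 < b i 0].

Definition obox_vol (a b : V) : R := \prod_(i < n) Num.max (b i 0 - a i 0) 0.

Definition leb_outer (E : set V) : \bar R :=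
  ereal_inf [set z : \bar R | exists a b : nat -> V,
     E `<=` \bigcup_k obox (a k) (b k) /\
     z = (\sum_(k <oo) (obox_vol (a k) (b k))%:E)%E].

Definition leb_measurable (E : set V) : Prop :=
  forall T : set V, leb_outer T = (leb_outer (T `&` E) + leb_outer (T `&` ~` E))%E.

Definition leb_meas_fun (f : V -> \bar R) : Prop :=
  forall a : R, leb_measurable [set x | (f x < a%:E)%E].

Definition lae (P : V -> Prop) : Prop := leb_outer [set x | ~ P x] = 0%E.

Definition is_dilation (A : 'M[R]_n) : Prop :=
  forall z : R[i], root (map_poly (real_complex R) (char_poly A)) z -> 1 < `|z|.

Definition centered_ellipsoid (D : set V) : Prop :=
  exists P : 'M[R]_n, P \in unitmx /\
    D = [set x | \sum_(i < n) ((P *m x) i 0) ^+ 2 < 1].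

Definition scale_set (r : R) (D : set V) : set V := [set r *: x | x in D].

Definition mpow (A : 'M[R]_n) (k : int) : 'M[R]_n :=
  match k with
  | Posz m => iter m (mulmx A) 1%:M
  | Negz m => iter m.+1 (mulmx (invmx A)) 1%:M
  end.

Definition lin_image (M : 'M[R]_n) (D : set V) : set V := [set M *m y | y in D].

Definition Bk (A : 'M[R]_n) (D : set V) (k : int) : set V := lin_image (mpow A k) D.

Definition aball (A : 'M[R]_n) (D : set V) (x : V) (k : int) : set V :=
  [set x + y | y in Bk A D k].

Definition tent (A : 'M[R]_n) (D : set V) (B : set V) : set (V * int) :=
  [set p | aball A D p.1 p.2 `<=` B].

Definition nnmeas (f : V -> \bar R) : Prop :=
  leb_meas_fun f /\ forall x, (0 <= f x)%E.

Definition indE (B : set V) : V -> \bar R := fun x => (\1_B x)%:E.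

(* The quasi-norm is given through its values on nonnegative measurable
   functions (by (ii), ||f||_X = || |f| ||_X).  Axioms: quasi-norm
   (nonnegativity, positive homogeneity, quasi-triangle inequality) and
   (i)-(iv) of the definition. *)
Definition ball_qBfs (A : 'M[R]_n) (D : set V) (N : (V -> \bar R) -> \bar R) : Prop :=
  [/\ forall f, nnmeas f -> (0 <= N f)%E,
      forall f (c : R), nnmeas f -> 0 <= c -> N (fun x => c%:E * f x)%E = (c%:E * N f)%E,
      exists K : R, 1 <= K /\ forall f g, nnmeas f -> nnmeas g ->
          (N (fun x => f x + g x) <= K%:E * (N f + N g))%E,
      forall f, nnmeas f -> N f = 0%E -> lae (fun x => f x = 0%E)
    & [/\ forall f g, nnmeas f -> nnmeas g -> lae (fun x => (g x <= f x)%E) -> (N g <= N f)%E,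
          forall (F : nat -> V -> \bar R) f, (forall m, nnmeas (F m)) -> nnmeas f ->
            lae (fun x => forall m, (F m x <= F m.+1 x)%E) ->
            lae (fun x => (fun m => F m x) @ \oo --> f x) ->
            (fun m => N (F m)) @ \oo --> N f
        & forall (x : V) (k : int), (N (indE (aball A D x k)) < +oo)%E]].

Definition borelVZ : set (set (V * int)) :=
  <<s [set S | exists (U : set V) (k : int), open U /\ S = U `*` [set k]] >>.

(* a (nonnegative) Borel measure; its values outside Borel sets are irrelevant *)
Definition borel_measure (mu : set (V * int) -> \bar R) : Prop :=
  [/\ mu set0 = 0%E,
      forall S, borelVZ S -> (0 <= mu S)%E
    & forall F : nat -> set (V * int), (forall i, borelVZ (F i)) ->
        trivIset setT F ->
        (fun m => \sum_(i < m) mu (F i))%E @ \oo --> mu (\bigcup_i F i)].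

Section Carleson.
Variables (A : 'M[R]_n) (D : set V) (N : (V -> \bar R) -> \bar R) (s : R)
          (mu : set (V * int) -> \bar R).

Let bl (c : nat -> V) (k : nat -> int) (j : nat) : set V := aball A D (c j) (k j).

(* ||1_{B^(j)}||_X (a positive real number under the axioms) *)
Let nB (c : nat -> V) (k : nat -> int) (j : nat) : R := fine (N (indE (bl c k j))).

Let coef (c : nat -> V) (k : nat -> int) (lam : nat -> R) (j : nat) : R :=
  (lam j / nB c k j) `^ s.

Let term (c : nat -> V) (k : nat -> int) (lam : nat -> R) (j : nat) : \bar R :=
  ((lam j / nB c k j)%:E * (leb_outer (bl c k j) `^ 2^-1)
    * (mu (tent A D (bl c k j)) `^ 2^-1))%E.

Let Ffin (m : nat) (c : nat -> V) (k : nat -> int) (lam : nat -> R) : V -> \bar R :=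
  fun x => ((\sum_(i < m) coef c k lam i * \1_(bl c k i) x) `^ s^-1)%:E.

Let Finf (c : nat -> V) (k : nat -> int) (lam : nat -> R) : V -> \bar R :=
  fun x => ((\sum_(i <oo) (coef c k lam i * \1_(bl c k i) x)%:E) `^ s^-1)%E.

Definition carleson_norm : \bar R :=
  ereal_sup [set v : \bar R | exists (m : nat) (c : nat -> V) (k : nat -> int)
      (lam : nat -> R),
      [/\ forall j, 0 <= lam j,
          \sum_(j < m) lam j != 0
        & v = ((\sum_(j < m) term c k lam j)
               * ((fine (N (Ffin m c k lam)))^-1)%:E)%E]].

Definition carleson_norm_tilde : \bar R :=
  ereal_sup [set v : \bar R | exists (c : nat -> V) (k : nat -> int)
      (lam : nat -> R),
      [/\ forall j, 0 <= lam j,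
          (0 < N (Finf c k lam) < +oo)%E
        & v = ((\sum_(j <oo) term c k lam j)
               * ((fine (N (Finf c k lam)))^-1)%:E)%E]].

End Carleson.
End Anisotropic.

(* A finite family is a countable one padded with zero coefficients, so the
   finite supremum is at most the countable one.  Conversely, for a countable
   family each partial sum of the numerator, divided by the X-quasi-norm of the
   whole square function, is at most the quotient of the truncated family,
   because truncation decreases the square function and hence, by (ii), its
   quasi-norm.  Both steps need the quotients of finite families to be
   admissible, i.e. the quasi-norm of a finite square function to be positive
   and finite.  Positivity comes from (i): dilated balls are Lebesgue
   measurable (half-spaces satisfy Caratheodory's criterion, and a ball is a
   sublevel set of a polynomial in the coordinates) and have positive measure
   (each contains a scaled copy of Delta).  Finiteness comes from (iv) and the
   quasi-triangle inequality. *)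

From Pilot Require Import Defs.
From HB Require Import structures.
From mathcomp Require Import all_boot all_order all_algebra.
From mathcomp Require Import all_classical all_reals all_analysis.
From mathcomp Require Import complex measurable_realfun.
From mathcomp Require Import lra.
Import Order.TTheory GRing.Theory Num.Theory.
Import numFieldTopology.Exports numFieldNormedType.Exports.
Local Open Scope classical_set_scope.
Local Open Scope ring_scope.

Set Implicit Arguments.
Unset Strict Implicit.
Unset Printing Implicit Defensive.

Lemma nneseries_reindex_pair (R : realType) (f : nat -> nat * nat)
    (g : nat * nat -> \bar R) :
  set_bij setT setT f -> (forall p, (0 <= g p)%E) ->
  (\sum_(k <oo) g (f k) = \sum_(i <oo) \sum_(j <oo) g (i, j))%E.
Proof.
move=> fbij g0.
rewrite nneseries_esumT // -(reindex_esum setT setT f g fbij).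
rewrite nneseries_esumT; last by move=> i; exact: nneseries_ge0.
rewrite [RHS](eq_esum (b := fun i => \esum_(j in setT) g (i, j))); last first.
  by move=> i _; rewrite nneseries_esumT.
rewrite esum_esum //; congr esum; first by apply/seteqP; split.
by apply/funext => -[].
Qed.

Lemma nneseries_le_partial_ub (R : realType) (u : nat -> \bar R) (x : \bar R) :
  (forall i, (0 <= u i)%E) -> (forall m, (\sum_(i < m) u i <= x)%E) ->
  (\sum_(i <oo) u i <= x)%E.
Proof.
move=> u_ge0 ub; apply: lime_le; first exact: is_cvg_nneseries.
by apply: nearW => m; rewrite big_mkord.
Qed.

Lemma nneseries_ge_partial (R : realType) (u : nat -> \bar R) m :
  (forall i, (0 <= u i)%E) -> (\sum_(i < m) u i <= \sum_(i <oo) u i)%E.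
Proof.
move=> u_ge0; have := @nneseries_lim_ge R u xpredT 0 m (fun i _ _ => u_ge0 i).
by rewrite big_mkord.
Qed.

Lemma nneseries_trunc (R : realType) (u : nat -> \bar R) m :
  (forall i, (0 <= u i)%E) -> (forall i, (m <= i)%N -> u i = 0%E) ->
  (\sum_(i <oo) u i = \sum_(i < m) u i)%E.
Proof.
move=> u_ge0 u_eq0; rewrite (nneseries_split 0 m) // add0n eseries0 ?adde0 ?big_mkord //.
by move=> i mi _; exact: u_eq0.
Qed.

Lemma powR_sum_indic_le (R : realType) (T : Type) (a : nat -> R) (B : nat -> set T)
    m (r : R) (x : T) :
  (forall i, 0 <= a i) -> 0 < r ->
  (\sum_(i < m) a i * \1_(B i) x) `^ r <=
  \sum_(i < m) (\sum_(j < m) a j) `^ r * \1_(B i) x.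
Proof.
move=> a_ge0 r_gt0; have [[i Bix]|] := pselect (exists i : 'I_m, B i x).
  apply: (@le_trans _ _ ((\sum_(j < m) a j) `^ r)).
    apply: ge0_ler_powR; first exact: ltW.
    - by rewrite nnegrE sumr_ge0 // => j _; rewrite mulr_ge0.
    - by rewrite nnegrE sumr_ge0.
    by apply: ler_sum => j _; rewrite indicE; case: (_ \in _); rewrite ?mulr1 ?mulr0.
  rewrite [X in _ <= X](bigD1 i) //= indicE mem_set // mulr1 lerDl.
  by apply: sumr_ge0 => j _; rewrite mulr_ge0 ?powR_ge0.
rewrite -forallNE => notB; rewrite big1 ?powR0 ?gt_eqF //.
  by apply: sumr_ge0 => j _; rewrite mulr_ge0 ?powR_ge0.
by move=> j _; rewrite indicE memNset ?mulr0.
Qed.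

Section lebesgue_outer_measure.
Variables (R : realType) (n : nat).
Local Notation V := 'cV[R]_n.
Local Notation leb := (@leb_outer R n).

Lemma obox_vol_ge0 (a b : V) : 0 <= obox_vol a b.
Proof. by apply: prodr_ge0 => i _; rewrite le_max lexx orbT. Qed.

Local Open Scope ereal_scope.

Lemma leb_outer_le_cover (E : set V) (a b : nat -> V) :
  E `<=` \bigcup_k obox (a k) (b k) ->
  leb E <= \sum_(k <oo) (obox_vol (a k) (b k))%:E.
Proof. by move=> Ecov; apply: ereal_inf_lbound; exists a, b. Qed.

Lemma leb_outer_ge0 (E : set V) : 0 <= leb E.
Proof.
apply: le_ereal_inf_tmp => _ [a [b [_ ->]]].
by apply: nneseries_ge0 => k _; rewrite lee_fin obox_vol_ge0.
Qed.

Lemma le_leb_outer : {homo leb : E F / E `<=` F >-> E <= F}.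
Proof.
move=> E F EF; apply: ereal_inf_le_tmp => _ [a [b [Fcov ->]]].
by exists a, b; split => //; apply: subset_trans Fcov.
Qed.

Lemma leb_outer0 : (0 < n)%N -> leb set0 = 0.
Proof.
move=> n_gt0; apply/eqP; rewrite eq_le leb_outer_ge0 andbT.
have := leb_outer_le_cover (a := fun=> 0%R) (b := fun=> 0%R) (sub0set _).
rewrite eseries0 // => k _ _; rewrite /obox_vol.
by case: n n_gt0 => // m _; rewrite big_ord_recl subrr maxxx mul0r.
Qed.

Lemma leb_outer_near_cover (E : set V) (e : R) :
  (0 < e)%R -> leb E \is a fin_num ->
  exists a b : nat -> V, E `<=` \bigcup_k obox (a k) (b k) /\
    \sum_(k <oo) (obox_vol (a k) (b k))%:E <= leb E + e%:E.
Proof.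
move=> e_gt0 finE; have [_ [a [b [Ecov ->]]] lt_e] := lb_ereal_inf_adherent e_gt0 finE.
by exists a, b; split => //; apply: ltW.
Qed.

Lemma leb_outer_sigma_subadditive : sigma_subadditive leb.
Proof.
move=> F; have [[i Fi_oo]|] := pselect (exists i, leb (F i) = +oo).
  rewrite (eseries_pinfty _ _ Fi_oo) ?leey // => k _.
  by rewrite -ltNye (lt_le_trans _ (leb_outer_ge0 _)).
rewrite -forallNE => Ffin; apply/lee_addgt0Pr => e e_gt0.
have covers k : exists ab : (nat -> V) * (nat -> V),
    F k `<=` \bigcup_j obox (ab.1 j) (ab.2 j) /\
    \sum_(j <oo) (obox_vol (ab.1 j) (ab.2 j))%:E
      <= leb (F k) + (e / (2 ^ k.+1)%:R)%:E.
  have finFk : leb (F k) \is a fin_num.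
    by rewrite ge0_fin_numE ?leb_outer_ge0 // ltey; apply/eqP/Ffin.
  have ek : (0 < e / (2 ^ k.+1)%:R)%R by rewrite divr_gt0.
  by have [a [b ab]] := leb_outer_near_cover ek finFk; exists (a, b).
have [G G_cov] := choice covers.
have [f fbij] : exists f : nat -> nat * nat, set_bij setT setT f.
  by apply/card_set_bijP; rewrite card_esym //; exact: card_nat2.
pose vol p := (obox_vol ((G p.1).1 p.2) ((G p.1).2 p.2))%:E.
have vol_ge0 p : 0 <= vol p by rewrite lee_fin obox_vol_ge0.
apply: (@le_trans _ _ (\sum_(k <oo) vol (f k))).
  apply: leb_outer_le_cover => x [i _ /(G_cov i).1 [j _ xij]].
  have [k _ fk] := set_bij_surj fbij (I : setT (i, j)).
  by exists k => //; rewrite /= fk.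
rewrite nneseries_reindex_pair //.
apply: le_trans (epsilon_trick _ _ _); last 2 first.
- by move=> k; exact: leb_outer_ge0.
- exact: ltW.
by apply: lee_nneseries => [i _ _|i _]; [exact: nneseries_ge0 | exact: (G_cov i).2].
Qed.

End lebesgue_outer_measure.

Section halfspace_split.
Variables (R : realType) (n : nat).
Local Notation V := 'cV[R]_n.
Local Notation leb := (@leb_outer R n).
Implicit Types (a b x : V) (i : 'I_n).

Definition cv_set x i (t : R) : V := \col_j (if j == i then t else x j 0).

Definition obox_face_vol a b i : R :=
  \prod_(j < n | j != i) Num.max (b j 0 - a j 0) 0.

Lemma cv_setE x i t : cv_set x i t i 0 = t.
Proof. by rewrite mxE eqxx. Qed.

Lemma obox_face_vol_ge0 a b i : 0 <= obox_face_vol a b i.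
Proof. by apply: prodr_ge0 => j _; rewrite le_max lexx orbT. Qed.

Lemma obox_vol_face a b i :
  obox_vol a b = Num.max (b i 0 - a i 0) 0 * obox_face_vol a b i.
Proof. by rewrite /obox_vol (bigD1 i). Qed.

Lemma obox_face_vol_setl a b i t : obox_face_vol (cv_set a i t) b i = obox_face_vol a b i.
Proof. by apply: eq_bigr => j ji; rewrite mxE (negbTE ji). Qed.

Lemma obox_face_vol_setr a b i t : obox_face_vol a (cv_set b i t) i = obox_face_vol a b i.
Proof. by apply: eq_bigr => j ji; rewrite mxE (negbTE ji). Qed.

Lemma obox_cut_below a b i c x : obox a b x -> x i 0 < c ->
  obox a (cv_set b i (Num.min (b i 0) c)) x.
Proof.
move=> abx xc j; rewrite [in X in _ && X]mxE.
by case: eqP => [->|_]; [rewrite lt_min xc andbT; have /andP[->] := abx i | exact: abx].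
Qed.

Lemma obox_cut_above a b i c x : obox a b x -> c < x i 0 ->
  obox (cv_set a i (Num.max (a i 0) c)) b x.
Proof.
move=> abx cx j; rewrite mxE.
by case: eqP => [->|_]; [rewrite gt_max cx andbT; have /andP[-> ->] := abx i | exact: abx].
Qed.

Lemma obox_vol_cut a b i c d : 0 < d ->
  obox_vol a (cv_set b i (Num.min (b i 0) c)) +
  obox_vol (cv_set a i (Num.max (a i 0) (c - d))) b <=
  obox_vol a b + d * obox_face_vol a b i.
Proof.
move=> d_gt0; rewrite !(obox_vol_face _ _ i) obox_face_vol_setl obox_face_vol_setr.
rewrite !cv_setE -!mulrDl; apply: ler_wpM2r; first exact: obox_face_vol_ge0.
rewrite /Num.max /Num.min; repeat case: ifPn => /=; rewrite ?ltNge ?negbK => *; lra.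
Qed.

Local Open Scope ereal_scope.

Lemma leb_outer_halfspace_split i (c : R) (X : set V) :
  leb (X `&` [set x | (x i 0 < c)%R]) + leb (X `&` ~` [set x | (x i 0 < c)%R])
  <= leb X.
Proof.
have [->|Xoo] := eqVneq (leb X) +oo; first by rewrite leey.
have finX : leb X \is a fin_num by rewrite ge0_fin_numE ?leb_outer_ge0 // ltey.
apply/lee_addgt0Pr => e e_gt0.
have e2_gt0 : (0 < e / 2)%R by rewrite divr_gt0.
have [a [b [Xcov Xvol]]] := leb_outer_near_cover e2_gt0 finX.
pose eps k := (e / 2 / (2 ^ k.+1)%:R)%R.
have eps_gt0 k : (0 < eps k)%R by rewrite divr_gt0.
(* The two halves of the k-th box overlap in a slab of width [d k] and volume
   at most [eps k]. *)
pose d k := (eps k / (obox_face_vol (a k) (b k) i + 1))%R.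
have d_gt0 k : (0 < d k)%R by rewrite divr_gt0 // ltr_wpDl ?obox_face_vol_ge0.
have below_cov : X `&` [set x | (x i 0 < c)%R] `<=`
    \bigcup_k obox (a k) (cv_set (b k) i (Num.min (b k i 0) c)%R).
  move=> x [/Xcov [k _ abx] xc]; exists k => //; exact: obox_cut_below.
have above_cov : X `&` ~` [set x | (x i 0 < c)%R] `<=`
    \bigcup_k obox (cv_set (a k) i (Num.max (a k i 0) (c - d k))%R) (b k).
  move=> x [/Xcov [k _ abx] /negP]; rewrite -leNgt => cx; exists k => //.
  by apply: obox_cut_above => //; rewrite ltrBlDr (le_lt_trans cx) // ltrDl.
apply: le_trans (leeD (leb_outer_le_cover below_cov) (leb_outer_le_cover above_cov)) _.
rewrite -nneseriesD => [|k _|k _]; try by rewrite lee_fin obox_vol_ge0.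
apply: (@le_trans _ _ (\sum_(k <oo) ((obox_vol (a k) (b k))%:E + (eps k)%:E))).
  apply: lee_nneseries => [k _ _|k _].
    by rewrite adde_ge0 // lee_fin ?obox_vol_ge0 // ltW.
  rewrite -!EFinD lee_fin (le_trans (obox_vol_cut _ _ _ _ (d_gt0 k))) // lerD2l.
  rewrite /d mulrAC ler_pdivrMr ?ltr_wpDl ?obox_face_vol_ge0 //.
  by rewrite mulrDr mulr1 lerDl ltW.
apply: le_trans (epsilon_trick _ _ _) _ => [k||]; first by rewrite lee_fin obox_vol_ge0.
- exact: ltW.
- by apply: le_trans (leeD2r _ Xvol) _; rewrite -addeA -EFinD -splitr.
Qed.

End halfspace_split.

Section ellipsoid.
Variables (R : realType) (n : nat).
Local Notation V := 'cV[R]_n.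
Local Notation leb := (@leb_outer R n).

Definition ellipsoid (P : 'M[R]_n) : set V :=
  [set w | \sum_i ((P *m w) i 0) ^+ 2 < 1].

Lemma unitmx_mpow (A : 'M[R]_n) k : A \in unitmx -> mpow A k \in unitmx.
Proof.
move=> uA; case: k => m /=.
  by elim: m => [|m IHm] /=; rewrite ?unitmx1 // unitmx_mul uA.
by elim: m => [|m IHm] /=; rewrite unitmx_mul unitmx_inv uA ?unitmx1.
Qed.

Lemma lin_image_ellipsoid (M P : 'M[R]_n) : M \in unitmx ->
  lin_image M (ellipsoid P) = ellipsoid (P *m invmx M).
Proof.
move=> uM; apply/seteqP; split => [_ [w Pw <-]|z Pz].
  by rewrite /ellipsoid /= -mulmxA (mulmxA (invmx M)) mulVmx // mul1mx.
by exists (invmx M *m z); rewrite /ellipsoid /= ?mulmxA // mulmxV // mul1mx.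
Qed.

Lemma aball_ellipsoid (A P : 'M[R]_n) (x : V) k : A \in unitmx ->
  aball A (ellipsoid P) x k =
  [set z | ellipsoid (P *m invmx (mpow A k)) (z - x)].
Proof.
move=> uA; rewrite /aball /Bk lin_image_ellipsoid ?unitmx_mpow //.
apply/seteqP; split => [_ [y Ey <-]|z Ez]; first by rewrite /= addrC addKr.
by exists (z - x) => //; rewrite addrC subrK.
Qed.

Definition mx_abs_sum (G : 'M[R]_n) : R := \sum_i \sum_j `|G i j|.

Lemma mulmx_coord_bound (G : 'M[R]_n) (u : V) (c : R) :
  0 <= c -> (forall j, `|u j 0| <= c) ->
  forall i, `|(G *m u) i 0| <= mx_abs_sum G * c.
Proof.
move=> c_ge0 u_le i; rewrite mxE (le_trans (ler_norm_sum _ _ _)) //.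
apply: (@le_trans _ _ (\sum_j `|G i j| * c)).
  by apply: ler_sum => j _; rewrite normrM ler_wpM2l.
rewrite -mulr_suml ler_wpM2r // /mx_abs_sum [X in _ <= X](bigD1 i) //= lerDl.
by apply: sumr_ge0 => k _; apply: sumr_ge0.
Qed.

Lemma sum_sqr_lt1_coord_le1 (u : V) :
  \sum_i (u i 0) ^+ 2 < 1 -> forall j, `|u j 0| <= 1.
Proof.
move=> u_lt1 j; rewrite -(ler_pXn2r (n := 2)) ?nnegrE // expr1n real_normK ?num_real //.
apply: le_trans (ltW u_lt1); rewrite (bigD1 j) //= lerDl.
by apply: sumr_ge0 => i _; exact: sqr_ge0.
Qed.

Lemma scale_ellipsoid_sub (P Q : 'M[R]_n) : P \in unitmx ->
  exists2 t : R, 0 < t & scale_set t (ellipsoid P) `<=` ellipsoid Q.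
Proof.
move=> uP; pose G := Q *m invmx P; pose S := mx_abs_sum G + 1.
have S_gt0 : 0 < S by rewrite ltr_wpDl // sumr_ge0 // => i _; exact: sumr_ge0.
pose t := (n%:R * S ^+ 2 + 1)^-1.
have nS_ge0 : 0 <= n%:R * S ^+ 2 by rewrite mulr_ge0 // sqr_ge0.
have t_gt0 : 0 < t by rewrite invr_gt0 ltr_wpDl.
have t_le1 : t <= 1 by rewrite invf_le1 ?lerDr ?ltr_wpDl.
have ntS_lt1 : n%:R * S ^+ 2 * t < 1 by rewrite ltr_pdivrMr ?ltr_wpDl // mul1r ltrDl.
exists t => // _ [w Pw <-]; rewrite /ellipsoid /= -scalemxAr.
have -> : Q *m w = G *m (P *m w) by rewrite !mulmxA mulmxKV.
apply: le_lt_trans ntS_lt1.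
apply: (@le_trans _ _ (\sum_(i < n) S ^+ 2 * t)); last first.
  by rewrite sumr_const cardT size_enum_ord -mulrA mulr_natl.
apply: ler_sum => i _.
have Gu_le : `|(G *m (P *m w)) i 0| <= S.
  have := mulmx_coord_bound G ler01 (@sum_sqr_lt1_coord_le1 (P *m w) Pw) i.
  by rewrite mulr1 => /le_trans; apply; rewrite lerDl.
rewrite mxE exprMn mulrC; apply: ler_pM; rewrite ?sqr_ge0 //.
  by rewrite -real_normK ?num_real // lerXn2r ?nnegrE // ltW.
by rewrite expr2 ger_pMr.
Qed.

Local Open Scope ereal_scope.

Lemma leb_outer_translate (x : V) (S : set V) :
  leb S <= leb [set (x + y)%R | y in S].
Proof.
apply: le_ereal_inf_tmp => _ [a [b [cov ->]]].
have Scov : S `<=` \bigcup_k obox (a k - x)%R (b k - x)%R.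
  move=> y Sy; have [k _ abk] := cov (x + y)%R (ex_intro2 _ _ y Sy erefl).
  exists k => // i; have /andP[] := abk i; rewrite !mxE => ? ?.
  by apply/andP; split; lra.
apply: le_trans (leb_outer_le_cover Scov) _.
apply: lee_nneseries => [k _ _|k _]; first by rewrite lee_fin obox_vol_ge0.
rewrite lee_fin (_ : obox_vol _ _ = obox_vol (a k) (b k)) //.
by apply: eq_bigr => i _; rewrite !mxE opprB addrA subrK.
Qed.

Lemma leb_outer_scale (t : R) (S : set V) : (0 < t)%R ->
  (t ^+ n)%:E * leb S <= leb (scale_set t S).
Proof.
move=> t_gt0; apply: le_ereal_inf_tmp => _ [a [b [cov ->]]].
have Scov : S `<=` \bigcup_k obox (t^-1 *: a k) (t^-1 *: b k).
  move=> y Sy; have [k _ abk] := cov (t *: y) (ex_intro2 _ _ y Sy erefl).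
  exists k => // i; have /andP[] := abk i; rewrite !mxE => lt_ay lt_yb.
  by rewrite !(mulrC t^-1)%R ltr_pdivrMr // ltr_pdivlMr // !(mulrC (y i 0))%R lt_ay.
have vol_scale k : obox_vol (t^-1 *: a k) (t^-1 *: b k) =
    (t^-1 ^+ n * obox_vol (a k) (b k))%R.
  have -> : (t^-1 ^+ n = \prod_(i < n) t^-1)%R by rewrite prodr_const card_ord.
  rewrite /obox_vol -big_split /=.
  by apply: eq_bigr => i _; rewrite !mxE -mulrBr maxr_pMr ?invr_ge0 ?ltW // mulr0.
have := leb_outer_le_cover Scov.
under eq_eseriesr do rewrite vol_scale EFinM.
rewrite nneseriesZl => [le_S|k _]; last by rewrite lee_fin obox_vol_ge0.
apply: le_trans (lee_wpmul2l _ le_S) _; first by rewrite lee_fin exprn_ge0 // ltW.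
by rewrite muleA -EFinM -exprMn mulfV ?gt_eqF // expr1n mul1e.
Qed.

Lemma aball_leb_outer_gt0 (A P : 'M[R]_n) (x : V) k :
  A \in unitmx -> P \in unitmx -> 0 < leb (ellipsoid P) ->
  0 < leb (aball A (ellipsoid P) x k).
Proof.
move=> uA uP E_gt0.
have [t t_gt0 tE_sub] := scale_ellipsoid_sub (P *m invmx (mpow A k)) uP.
apply: lt_le_trans (leb_outer_translate x (Bk A (ellipsoid P) k)).
rewrite /Bk lin_image_ellipsoid ?unitmx_mpow //.
apply: lt_le_trans (le_leb_outer tE_sub).
apply: lt_le_trans (leb_outer_scale _ t_gt0).
by rewrite mule_gt0 // lte_fin exprn_gt0.
Qed.

End ellipsoid.

Section lebesgue_measurable.
Variables (R : realType) (n : nat).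
Hypothesis n_gt0 : (0 < n)%N.
Local Notation V := 'cV[R]_n.
Local Notation leb := (@leb_outer R n).

HB.instance Definition _ := isOuterMeasure.Build R V leb (@leb_outer0 R n n_gt0)
  (@leb_outer_ge0 R n) (@le_leb_outer R n) (@leb_outer_sigma_subadditive R n).

(* The measurable sets of [L] are, by conversion, the [leb_measurable] sets. *)
Local Notation L := (caratheodory_type leb).

Lemma measurable_coord (i : 'I_n) : measurable_fun setT (fun x : L => x i 0).
Proof.
apply: (measurability _ (RGenInftyO.measurableE R)) => // _ [_ [c ->] <-].
rewrite setTI (_ : _ @^-1` _ = [set x : V | x i 0 < c]); last first.
  by apply/seteqP; split => x /=; rewrite in_itv.
by apply: le_caratheodory_measurable => X; exact: leb_outer_halfspace_split.
Qed.

Lemma measurable_fun_mulmx_coord (Q : 'M[R]_n) (x : V) (i : 'I_n) :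
  measurable_fun setT (fun z : L => (Q *m (z - x)) i 0).
Proof.
under eq_fun do rewrite mxE.
apply: measurable_sum => j; apply: measurable_funM => //.
by under eq_fun do rewrite !mxE; apply: measurable_funB => //; exact: measurable_coord.
Qed.

Lemma measurable_ellipsoid_at (Q : 'M[R]_n) (x : V) :
  measurable [set z : L | ellipsoid Q (z - x)].
Proof.
pose q (z : L) := \sum_i ((Q *m (z - x)) i 0) ^+ 2.
have mq : measurable_fun setT q.
  apply: measurable_sum => i; apply: measurable_funX.
  exact: measurable_fun_mulmx_coord.
have -> : [set z : L | q z < 1] = setT `&` q @^-1` `]-oo, 1[.
  by rewrite setTI; apply/seteqP; split => z /=; rewrite in_itv.
by apply: mq => //; exact: measurable_itv.
Qed.

Lemma leb_measurable_aball (A P : 'M[R]_n) (x : V) k : A \in unitmx ->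
  leb_measurable (aball A (ellipsoid P) x k).
Proof. by move=> uA; rewrite aball_ellipsoid //; exact: measurable_ellipsoid_at. Qed.

Let nnmeas_measurable (f : L -> \bar R) :
  measurable_fun setT f -> (forall x, (0 <= f x)%E) -> nnmeas f.
Proof.
move=> mf f_ge0; split => // a.
have -> : [set x : V | (f x < a%:E)%E] = setT `&` f @^-1` `]-oo, a%:E[.
  by rewrite setTI; apply/seteqP; split => x /=; rewrite in_itv.
by apply: mf => //; exact: emeasurable_itv.
Qed.

Lemma nnmeas_indic (E : set V) : leb_measurable E -> nnmeas (indE E).
Proof.
by move=> mE; apply: nnmeas_measurable => [|x]; rewrite ?lee_fin //; exact/measurable_EFinP.
Qed.

Lemma nnmeas_scale_indic (c : R) (E : set V) : 0 <= c -> leb_measurable E ->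
  nnmeas (fun x => (c%:E * indE E x)%E).
Proof.
move=> c_ge0 mE; apply: nnmeas_measurable => [|x]; last by rewrite mule_ge0 ?lee_fin.
by apply/measurable_EFinP; apply: measurable_funM.
Qed.

Variables (c : nat -> R) (B : nat -> set V).
Hypotheses (c_ge0 : forall i, 0 <= c i) (mB : forall i, leb_measurable (B i)).

Let measurable_fun_indic_term i : measurable_fun setT (fun x : L => c i * \1_(B i) x).
Proof. by apply: measurable_funM => //; apply: measurable_indic; exact: mB. Qed.

Lemma nnmeas_sum_indic m :
  nnmeas (fun x => (\sum_(i < m) c i * \1_(B i) x)%:E).
Proof.
apply: nnmeas_measurable => [|x]; last by rewrite lee_fin sumr_ge0 // => i _; rewrite mulr_ge0.
by apply/measurable_EFinP/measurable_sum.
Qed.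

Lemma nnmeas_powR_sum_indic m r :
  nnmeas (fun x => ((\sum_(i < m) c i * \1_(B i) x) `^ r)%:E).
Proof.
apply: nnmeas_measurable => [|x]; last by rewrite lee_fin powR_ge0.
apply/measurable_EFinP.
apply: (measurableT_comp (measurable_powR r)); exact: measurable_sum.
Qed.

Lemma nnmeas_poweR_series_indic r :
  nnmeas (fun x => ((\sum_(i <oo) (c i * \1_(B i) x)%:E) `^ r)%E).
Proof.
apply: nnmeas_measurable => [|x]; last exact: poweR_ge0.
apply: (measurableT_comp (measurable_poweR r)).
apply: ge0_emeasurable_sum => [k x _ _|k _]; first by rewrite lee_fin mulr_ge0.
exact/measurable_EFinP.
Qed.

End lebesgue_measurable.

Section ball_quasi_norm.
Variables (R : realType) (n : nat) (A : 'M[R]_n) (D : set 'cV[R]_n)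
  (N : ('cV[R]_n -> \bar R) -> \bar R).
Hypotheses (n_gt0 : (0 < n)%N) (NX : ball_qBfs A D N).
Local Notation V := 'cV[R]_n.
Local Notation leb := (@leb_outer R n).
Local Open Scope ereal_scope.

Lemma lae_forall (Q : V -> Prop) : (forall x, Q x) -> lae Q.
Proof.
move=> allQ; rewrite /lae (_ : [set x | ~ Q x] = set0) ?leb_outer0 //.
by apply/seteqP; split => x //=.
Qed.

Lemma qnorm_ge0 f : nnmeas f -> 0 <= N f.
Proof. by case: NX => N_ge0 *; exact: N_ge0. Qed.

Lemma le_qnorm f g : nnmeas f -> nnmeas g -> (forall x, g x <= f x) -> N g <= N f.
Proof.
by case: NX => _ _ _ _ [N_mono _ _] mf mg gf; apply: N_mono => //; exact: lae_forall.
Qed.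

Lemma qnorm_gt0 f (E : set V) : nnmeas f -> 0 < leb E ->
  (forall x, E x -> f x != 0) -> 0 < N f.
Proof.
case: NX => _ _ _ N0_ae _ mf E_gt0 f_neq0; rewrite lt_def qnorm_ge0 // andbT.
apply/eqP => /(N0_ae _ mf) f_null.
have : leb E <= 0 by rewrite -f_null; apply: le_leb_outer => x /f_neq0/eqP.
by rewrite leNgt E_gt0.
Qed.

Lemma qnorm_sum_indic_lt_pinfty (c : nat -> R) (B : nat -> set V) m :
  (forall i, (0 <= c i)%R) -> (forall i, leb_measurable (B i)) ->
  (forall i, N (indE (B i)) < +oo) ->
  N (fun x => (\sum_(i < m) c i * \1_(B i) x)%:E) < +oo.
Proof.
case: NX => _ N_hom [K [K_ge1 N_tri]] _ _ c_ge0 mB NB_fin.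
elim: m => [|m IHm].
  have -> : (fun x => (\sum_(i < 0) c i * \1_(B i) x)%:E) = (fun x => 0%:E * indE (B 0%N) x).
    by apply/funext => x; rewrite big_ord0 mul0e.
  by rewrite N_hom ?mul0e ?ltry //; exact: nnmeas_indic.
have -> : (fun x => (\sum_(i < m.+1) c i * \1_(B i) x)%:E) =
    (fun x => (\sum_(i < m) c i * \1_(B i) x)%:E + (c m)%:E * indE (B m) x).
  by apply/funext => x; rewrite big_ord_recr /= EFinD EFinM.
apply: le_lt_trans (N_tri _ _ (nnmeas_sum_indic _ _ _ _) (nnmeas_scale_indic _ _ _)) _ => //.
rewrite lte_mul_pinfty ?lee_fin ?(le_trans ler01) // lte_add_pinfty //.
by rewrite N_hom ?lte_mul_pinfty ?lee_fin //; exact: nnmeas_indic.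
Qed.

End ball_quasi_norm.

Section carleson.
Variables (R : realType) (n : nat) (A P : 'M[R]_n)
  (N : ('cV[R]_n -> \bar R) -> \bar R) (s : R) (mu : set ('cV[R]_n * int) -> \bar R).
Hypotheses (n_gt0 : (0 < n)%N) (uA : A \in unitmx) (uP : P \in unitmx)
  (E_gt0 : (0 < leb_outer (ellipsoid P))%E) (NX : ball_qBfs A (ellipsoid P) N)
  (s_gt0 : 0 < s).
Local Notation V := 'cV[R]_n.
Local Notation leb := (@leb_outer R n).
Local Notation D := (ellipsoid P).
Implicit Types (c : nat -> V) (k : nat -> int) (lam : nat -> R).

(* These mirror the local definitions of Defs, so that [carleson_normE] and
   [carleson_norm_tildeE] hold by conversion. *)
Let ball c k j : set V := aball A D (c j) (k j).
Let nB c k j : R := fine (N (indE (ball c k j))).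
Let coef c k lam j : R := (lam j / nB c k j) `^ s.
Let term c k lam j : \bar R :=
  ((lam j / nB c k j)%:E * (leb (ball c k j) `^ 2^-1)
    * (mu (tent A D (ball c k j)) `^ 2^-1))%E.
Let Ffin m c k lam : V -> \bar R :=
  fun x => ((\sum_(i < m) coef c k lam i * \1_(ball c k i) x) `^ s^-1)%:E.
Let Finf c k lam : V -> \bar R :=
  fun x => ((\sum_(i <oo) (coef c k lam i * \1_(ball c k i) x)%:E) `^ s^-1)%E.

Let carleson_normE : carleson_norm A D N s mu =
  ereal_sup [set v : \bar R | exists m c k lam,
    [/\ forall j, 0 <= lam j, \sum_(j < m) lam j != 0
      & v = ((\sum_(j < m) term c k lam j) * ((fine (N (Ffin m c k lam)))^-1)%:E)%E]].
Proof. by []. Qed.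

Let carleson_norm_tildeE : carleson_norm_tilde A D N s mu =
  ereal_sup [set v : \bar R | exists c k lam,
    [/\ forall j, 0 <= lam j, (0 < N (Finf c k lam) < +oo)%E
      & v = ((\sum_(j <oo) term c k lam j) * ((fine (N (Finf c k lam)))^-1)%:E)%E]].
Proof. by []. Qed.

Let ball_measurable c k j : leb_measurable (ball c k j).
Proof. exact: leb_measurable_aball. Qed.

Let ball_leb_gt0 c k j : (0 < leb (ball c k j))%E.
Proof. exact: aball_leb_outer_gt0. Qed.

Let ball_qnorm_gt0 c k j : 0 < nB c k j.
Proof.
case: NX => _ _ _ _ [_ _ /(_ (c j) (k j)) NB_fin]; apply: fine_gt0; rewrite NB_fin andbT.
apply: (qnorm_gt0 NX (nnmeas_indic n_gt0 (ball_measurable c k j)) (ball_leb_gt0 c k j)).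
by move=> x Bx; rewrite /indE indicE (mem_set Bx) eqe oner_eq0.
Qed.

Let coef_ge0 c k lam j : 0 <= coef c k lam j.
Proof. exact: powR_ge0. Qed.

Let coef_eq0 c k lam j : lam j = 0 -> coef c k lam j = 0.
Proof. by move=> lam0; rewrite /coef lam0 mul0r powR0 // gt_eqF. Qed.

Let coef_gt0 c k lam j : 0 < lam j -> 0 < coef c k lam j.
Proof. by move=> lam_gt0; apply: powR_gt0; rewrite divr_gt0. Qed.

Let term_ge0 c k lam j : 0 <= lam j -> (0 <= term c k lam j)%E.
Proof. by move=> lam_ge0; rewrite !mule_ge0 ?poweR_ge0 // lee_fin divr_ge0 // ltW. Qed.

Let term_eq0 c k lam j : lam j = 0 -> term c k lam j = 0%E.
Proof. by move=> lam0; rewrite /term lam0 mul0r !mul0e. Qed.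

Let nnmeas_Ffin m c k lam : nnmeas (Ffin m c k lam).
Proof. exact: nnmeas_powR_sum_indic. Qed.

Let nnmeas_Finf c k lam : nnmeas (Finf c k lam).
Proof. exact: nnmeas_poweR_series_indic. Qed.

Let Ffin_le_Finf m c k lam x : (Ffin m c k lam x <= Finf c k lam x)%E.
Proof.
have summand_ge0 i : (0 <= (coef c k lam i * \1_(ball c k i) x)%:E)%E.
  by rewrite lee_fin mulr_ge0.
have s_inv_ge0 : 0 <= s^-1 by rewrite invr_ge0 ltW.
rewrite /Ffin /Finf -poweR_EFin -sumEFin gt0_ler_poweR //.
- by rewrite in_itv /= sume_ge0 ?leey.
- by rewrite in_itv /= nneseries_ge0 ?leey.
- exact: nneseries_ge_partial.
Qed.

Let qnorm_Ffin_gt0 m c k lam (j : 'I_m) : 0 < lam j -> (0 < N (Ffin m c k lam))%E.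
Proof.
move=> lam_gt0; apply: (qnorm_gt0 NX (nnmeas_Ffin m c k lam) (ball_leb_gt0 c k j)).
move=> x Bx; rewrite eqe gt_eqF // powR_gt0 // (bigD1 j) //= indicE (mem_set Bx).
by rewrite mulr1 ltr_pwDl ?coef_gt0 // sumr_ge0 // => i _; rewrite mulr_ge0.
Qed.

Let qnorm_Ffin_lt_pinfty m c k lam : (N (Ffin m c k lam) < +oo)%E.
Proof.
pose C := (\sum_(i < m) coef c k lam i) `^ s^-1.
have C_ge0 : 0 <= C by exact: powR_ge0.
apply: le_lt_trans
  (qnorm_sum_indic_lt_pinfty n_gt0 NX m (fun=> C_ge0) (ball_measurable c k) _).
  apply: (le_qnorm n_gt0 NX) => [||x]; last 2 first.
  - exact: nnmeas_Ffin.
  - by rewrite lee_fin; apply: powR_sum_indic_le; rewrite ?invr_gt0.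
  exact: (nnmeas_sum_indic n_gt0 (c := fun=> C) (fun=> C_ge0) (ball_measurable c k)).
by case: NX => _ _ _ _ [_ _ + i] => /(_ (c i) (k i)).
Qed.

Let trunc m lam j := if (j < m)%N then lam j else 0.

Let Finf_trunc m c k lam : Finf c k (trunc m lam) = Ffin m c k lam.
Proof.
apply/funext => x; rewrite /Finf (nneseries_trunc (m := m)) => [|i|i mi].
- rewrite sumEFin poweR_EFin /Ffin; congr ((_ `^ _)%:E).
  by apply: eq_bigr => i _; rewrite /coef /trunc ltn_ord.
- by rewrite lee_fin mulr_ge0.
- by rewrite coef_eq0 ?mul0r // /trunc ltnNge mi.
Qed.

Let term_series_trunc m c k lam : (forall j, 0 <= lam j) ->
  (\sum_(j <oo) term c k (trunc m lam) j = \sum_(j < m) term c k lam j)%E.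
Proof.
move=> lam_ge0; rewrite (nneseries_trunc (m := m)) => [|i|i mi].
- by apply: eq_bigr => i _; rewrite /term /trunc ltn_ord.
- by apply: term_ge0; rewrite /trunc; case: ifP.
- by rewrite term_eq0 // /trunc ltnNge mi.
Qed.

Lemma carleson_norm_le_tilde :
  (carleson_norm A D N s mu <= carleson_norm_tilde A D N s mu)%E.
Proof.
rewrite carleson_normE carleson_norm_tildeE; apply: ereal_sup_le.
move=> _ [m [c [k [lam [lam_ge0 sum_neq0 ->]]]]].
have [j /andP[_ lam_gt0]] := psumr_neq0P (fun (j : 'I_m) _ => lam_ge0 j) (elimN eqP sum_neq0).
exists c, k, (trunc m lam); rewrite Finf_trunc term_series_trunc //; split => //.
- by move=> i; rewrite /trunc; case: ifP.
- by rewrite (qnorm_Ffin_gt0 c k lam_gt0) qnorm_Ffin_lt_pinfty.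
Qed.

Let carleson_norm_ge0 : (0 <= carleson_norm A D N s mu)%E.
Proof.
pose c : nat -> V := fun=> 0; pose k : nat -> int := fun=> 0; pose lam : nat -> R := fun=> 1.
rewrite carleson_normE; apply: le_trans (ereal_sup_ubound _); last first.
  by exists 1%N, c, k, lam; split => //; rewrite big_ord1 oner_eq0.
apply: mule_ge0; first by apply: sume_ge0 => j _; exact: term_ge0.
by rewrite lee_fin invr_ge0 fine_ge0 // (qnorm_ge0 NX (nnmeas_Ffin 1 c k lam)).
Qed.

Lemma carleson_norm_tilde_le :
  (carleson_norm_tilde A D N s mu <= carleson_norm A D N s mu)%E.
Proof.
rewrite carleson_norm_tildeE; apply: ge_ereal_sup.
move=> _ [c [k [lam [lam_ge0 /andP[Ninf_gt0 Ninf_fin] ->]]]].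
have Ninf_fine_gt0 : 0 < fine (N (Finf c k lam)) by apply: fine_gt0; rewrite Ninf_gt0.
rewrite muleC -nneseriesZl => [|j _]; last exact: term_ge0.
apply: nneseries_le_partial_ub => [j|m].
  by rewrite mule_ge0 ?term_ge0 // lee_fin invr_ge0 ltW.
have [[j lam_gt0]|] := pselect (exists j : 'I_m, 0 < lam j); last first.
  rewrite -forallNE => lam_le0; rewrite big1 ?carleson_norm_ge0 // => j _.
  by rewrite term_eq0 ?mule0 //; apply/le_anti; rewrite lam_ge0 andbT leNgt; exact/negP.
have Nfin_le : (N (Ffin m c k lam) <= N (Finf c k lam))%E.
  by apply: (le_qnorm n_gt0 NX) => // x; exact: Ffin_le_Finf.
have Nfin_fine_gt0 : 0 < fine (N (Ffin m c k lam)).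
  by apply: fine_gt0; rewrite (qnorm_Ffin_gt0 c k lam_gt0) qnorm_Ffin_lt_pinfty.
rewrite carleson_normE; apply: le_trans (ereal_sup_ubound _); last first.
  exists m, c, k, lam; split => //.
  by rewrite (bigD1 j) //= gt_eqF // ltr_pwDl // sumr_ge0.
rewrite -ge0_sume_distrr => [|i _]; last exact: term_ge0.
rewrite [X in (_ <= X)%E]muleC; apply: lee_wpmul2r.
  by apply: sume_ge0 => i _; exact: term_ge0.
rewrite lee_fin lef_pV2 ?posrE //; apply: fine_le Nfin_le.
  by rewrite ge0_fin_numE ?qnorm_Ffin_lt_pinfty // ltW ?(qnorm_Ffin_gt0 c k lam_gt0).
by rewrite ge0_fin_numE ?Ninf_fin // ltW.
Qed.

End carleson.

Lemma dilation_unitmx (R : realType) (n : nat) (A : 'M[R]_n) :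
  is_dilation A -> A \in unitmx.
Proof.
move=> dilA; rewrite unitmxE unitfE; apply/eqP => detA0.
have : 1 < `|0 : R[i]|.
  apply: dilA; rewrite /root -(rmorph0 (real_complex R)) horner_map.
  by rewrite horner_coef0 char_poly_det detA0 mulr0 rmorph0.
by rewrite normr0 ltr10.
Qed.

Unset Implicit Arguments.

Theorem proposition6p2 (R : realType) (n : nat) (A : 'M[R]_n)
  (D : set 'cV[R]_n) (r : R) (N : ('cV[R]_n -> \bar R) -> \bar R) (s : R)
  (mu : set ('cV[R]_n * int) -> \bar R) :
  (0 < n)%N ->
  is_dilation A ->
  centered_ellipsoid D -> leb_outer D = 1%E ->
  1 < r -> D `<=` scale_set r D -> scale_set r D `<=` lin_image A D ->
  ball_qBfs A D N ->
  0 < s ->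
  borel_measure mu ->
  carleson_norm_tilde A D N s mu = carleson_norm A D N s mu.
Proof.
move=> n_gt0 /dilation_unitmx uA [P [uP ->]] D1 _ _ _ NX s_gt0 _.
have E_gt0 : (0 < leb_outer (ellipsoid P))%E by rewrite D1 lte01.
apply/le_anti; rewrite (carleson_norm_tilde_le mu n_gt0 uA uP E_gt0 NX s_gt0).
exact: (carleson_norm_le_tilde mu n_gt0 uA uP E_gt0 NX s_gt0).
Qed.
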